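(* Let $(\alpha_j,\rho_j)_{j\in\mathbb{Z}}$ be a sequence of pairs $(\alpha_j,\rho_j)\in\mathbb{C}^2$ with $|\alpha_j|^2+|\rho_j|^2=1$, and let $\mathcal E=\mathcal L\mathcal M$ be the associated generalized extended CMV matrix on $\ell^2(\mathbb{Z})$. Identify $\ell^2(\mathbb{Z})$ with $\ell^2(\mathbb{Z})\otimes\mathbb{C}^2$ via $\delta_{2j-1}\mapsto\delta_j^+$ and $\delta_{2j}\mapsto\delta_j^-$. Then under this identification $$\mathcal E=S_+C_1S_-C_2,$$ where $C_1,C_2$ are the coin operators with local coins $C_1(j)=\sigma_1\Theta(\alpha_{2j},\rho_{2j})$ and $C_2(j)=\sigma_1\Theta(\alpha_{2j-1},\rho_{2j-1})$, and $\sigma_1=\begin{bmatrix}0&1\\1&0\end{bmatrix}$.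
   Context: For $(\alpha,\rho)\in\mathbb{C}^2$ with $|\alpha|^2+|\rho|^2=1$, $\Theta(\alpha,\rho)=\begin{bmatrix}\bar\alpha&\rho\\ \bar\rho&-\alpha\end{bmatrix}$. $\mathcal L=\bigoplus_{j\in\mathbb{Z}}\Theta(\alpha_{2j},\rho_{2j})$ and $\mathcal M=\bigoplus_{j\in\mathbb{Z}}\Theta(\alpha_{2j+1},\rho_{2j+1})$, where each block $\Theta(\alpha_i,\rho_i)$ acts on $\ell^2(\{i,i+1\})$ as a matrix with respect to the basis $(\delta_i,\delta_{i+1})$; $\mathcal E=\mathcal L\mathcal M$. On $\ell^2(\mathbb{Z})\otimes\mathbb{C}^2$ with basis $\delta_j^\pm=\delta_j\otimes e_\pm$ ($e_+=(1,0)^\top$, $e_-=(0,1)^\top$), $S_\pm=T^{\pm1}\otimes P_\pm+\mathbb{1}\otimes P_\mp$ where $T\delta_j=\delta_{j+1}$ and $P_\pm=|e_\pm\rangle\langle e_\pm|$; a coin operator acts as $C(\delta_j\otimes v)=\delta_j\otimes C(j)v$. *)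

From HB Require Import structures.
From mathcomp Require Import all_boot all_order all_algebra.
From mathcomp Require Import complex.
From mathcomp Require Import reals.
Set Implicit Arguments. Unset Strict Implicit. Unset Printing Implicit Defensive.
Import Order.TTheory GRing.Theory Num.Theory.
Local Open Scope ring_scope.

Section Defs.
Variable R : realType.
Local Notation C := R[i].

Definition Theta (a r : C) : 'M[C]_2 :=
  \matrix_(i < 2, j < 2)
    if i == 0 then (if j == 0 then a^* else r)
    else (if j == 0 then r^* else - a).

Definition sigma1 : 'M[C]_2 :=
  \matrix_(i < 2, j < 2) if i == j then 0 else 1.

(* Vectors of l^2(Z) are represented by sequences Z -> C; all operators here
   are local (banded), so they act on arbitrary sequences and equality of the
   operators on l^2(Z) amounts to equality of their actions on all sequences. *)

(* Block-diagonal operator  (+)_{i = p mod 2} Theta(alpha_i, rho_i) where the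
   block Theta(alpha_i,rho_i) acts on span(delta_i, delta_(i+1)). *)
Definition blockop (p : int) (alpha rho : int -> C) (v : int -> C) (n : int) : C :=
  let i := if ~~ odd `|n - p|%N then n else n - 1 in
  let M := Theta (alpha i) (rho i) in
  let k : 'I_2 := if n == i then 0 else 1 in
  M k 0 * v i + M k 1 * v (i + 1).

Definition CMV_L (alpha rho : int -> C) := blockop 0 alpha rho.
Definition CMV_M (alpha rho : int -> C) := blockop 1 alpha rho.
Definition CMV_E (alpha rho : int -> C) (v : int -> C) : int -> C :=
  CMV_L alpha rho (CMV_M alpha rho v).

(* Vectors of l^2(Z) (x) C^2 : psi j = column vector (psi_+(j), psi_-(j)),
   e_+ = index 0, e_- = index 1. *)
Definition shiftP (psi : int -> 'cV[C]_2) (j : int) : 'cV[C]_2 :=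
  \col_(k < 2) (if k == 0 then psi (j - 1) k 0 else psi j k 0).
Definition shiftM (psi : int -> 'cV[C]_2) (j : int) : 'cV[C]_2 :=
  \col_(k < 2) (if k == 0 then psi j k 0 else psi (j + 1) k 0).
Definition coin (Cj : int -> 'M[C]_2) (psi : int -> 'cV[C]_2) (j : int) : 'cV[C]_2 :=
  Cj j *m psi j.

(* The identification  delta_(2j-1) <-> delta_j^+ , delta_(2j) <-> delta_j^- :
   (U psi)(2j-1) = psi_+(j), (U psi)(2j) = psi_-(j).  Note (n+1) %/ 2 = j
   for n = 2j-1 and n = 2j. *)
Definition ident (psi : int -> 'cV[C]_2) (n : int) : C :=
  psi ((n + 1) %/ 2)%Z (if odd `|n|%N then 0 else 1) 0.

End Defs.

From HB Require Import structures.
From mathcomp Require Import all_boot all_order all_algebra.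
From mathcomp Require Import complex.
From mathcomp Require Import reals.
From mathcomp Require Import zify.
Import Order.TTheory GRing.Theory Num.Theory.
Local Open Scope ring_scope.

(* Each of L and M is a coin operator once l^2(Z) is identified with
   l^2(Z) (x) C^2 by pairing the sites along its blocks, i.e. starting at an
   even site for L and at an odd site for M.  The two pairings differ by half a
   step: passing from one to the other is a shift S_+ or S_- preceded by the
   swap sigma1 of the two components.  Composing the two descriptions gives
   the factorization. *)

Lemma ord2P (k : 'I_2) : k = 0 \/ k = 1.
Proof. by case: k => [[|[|//]]] ?; [left | right]; apply/val_inj. Qed.

Lemma mulmx2_colE (K : pzRingType) (A : 'M[K]_2) (x : 'cV[K]_2) (k : 'I_2) :
  (A *m x) k 0 = A k 0 * x 0 0 + A k 1 * x 1 0.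
Proof.
rewrite mxE !big_ord_recl big_ord0 addr0.
by congr (_ + A k _ * x _ 0); apply/val_inj.
Qed.

Lemma divmod2_offset (p n : int) : exists j (k : 'I_2), n = 2 * j + p + k%:Z.
Proof.
have [od | ev] := boolP (odd `|n - p|%N).
- by exists ((n - p) %/ 2)%Z, 1 => /=; lia.
- by exists ((n - p) %/ 2)%Z, 0 => /=; lia.
Qed.

Section Interleave.
Context {R : realType}.
Local Notation C := R[i].
Implicit Types (p q n j : int) (alpha rho : int -> C) (v : int -> C).
Implicit Types (phi chi psi : int -> 'cV[C]_2) (Cj : int -> 'M[C]_2).

Definition interleave p phi n : C :=
  phi ((n - p) %/ 2)%Z (if odd `|n - p|%N then 1 else 0) 0.

Lemma interleaveE p phi j (k : 'I_2) n :
  n = 2 * j + p + k%:Z -> interleave p phi n = phi j k 0.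
Proof.
move=> ->; rewrite /interleave.
have [-> | ->] := ord2P k => /=.
- rewrite (_ : ((2 * j + p + 0 - p) %/ 2)%Z = j); last by lia.
  by rewrite (_ : odd _ = false); last by lia.
- rewrite (_ : ((2 * j + p + 1 - p) %/ 2)%Z = j); last by lia.
  by rewrite (_ : odd _ = true); last by lia.
Qed.

Lemma ident_interleave psi : ident psi = interleave (-1) psi.
Proof.
apply: boolp.funext => n; rewrite /ident /interleave opprK.
by rewrite (_ : odd `|(n + 1)%R|%N = ~~ odd `|n|%N); [case: odd | lia].
Qed.

Lemma blockop_blockE q alpha rho v n (k : 'I_2) : ~~ odd `|n - q|%N ->
  blockop q alpha rho v (n + k%:Z) =
  Theta (alpha n) (rho n) k 0 * v n + Theta (alpha n) (rho n) k 1 * v (n + 1).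
Proof.
move=> nq; rewrite /blockop.
have [-> | ->] := ord2P k => /=.
- by rewrite addr0 (negPf nq) eqxx.
- rewrite (_ : odd _ = true); last by lia.
  by rewrite addrK (_ : (n + 1 == n) = false) //=; lia.
Qed.

Lemma blockop_interleave q p alpha rho Cj phi :
  ~~ odd `|q - p|%N ->
  (forall j, Cj j = Theta (alpha (2 * j + p)) (rho (2 * j + p))) ->
  blockop q alpha rho (interleave p phi) = interleave p (coin Cj phi).
Proof.
move=> qp CjE; apply: boolp.funext => n.
have [j [k ->]] := divmod2_offset p n.
rewrite blockop_blockE; last by lia.
rewrite [RHS](interleaveE _ _ j k) // /coin mulmx2_colE CjE.
by rewrite (interleaveE p phi j 0) ?(interleaveE p phi j 1) //=; lia.
Qed.

Lemma sigma1_mulmx0 (x : 'cV[C]_2) : (sigma1 R *m x) 0 0 = x 1 0.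
Proof. by rewrite mulmx2_colE !mxE /= mul0r mul1r add0r. Qed.

Lemma sigma1_mulmx1 (x : 'cV[C]_2) : (sigma1 R *m x) 1 0 = x 0 0.
Proof. by rewrite mulmx2_colE !mxE /= mul0r mul1r addr0. Qed.

Lemma interleave_shiftM p chi :
  interleave (p + 1) (shiftM (coin (fun=> sigma1 R) chi)) = interleave p chi.
Proof.
apply: boolp.funext => n.
have [j [k ->]] := divmod2_offset (p + 1) n.
rewrite (interleaveE _ _ j k) // /shiftM /coin mxE.
have [-> | ->] := ord2P k => /=.
- by rewrite sigma1_mulmx0 (interleaveE _ _ j 1) //=; lia.
- by rewrite sigma1_mulmx1 (interleaveE _ _ (j + 1) 0) //=; lia.
Qed.

Lemma interleave_shiftP p chi :
  interleave p (shiftP (coin (fun=> sigma1 R) chi)) = interleave (p + 1) chi.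
Proof.
apply: boolp.funext => n.
have [j [k ->]] := divmod2_offset p n.
rewrite (interleaveE _ _ j k) // /shiftP /coin mxE.
have [-> | ->] := ord2P k => /=.
- by rewrite sigma1_mulmx0 (interleaveE _ _ (j - 1) 1) //=; lia.
- by rewrite sigma1_mulmx1 (interleaveE _ _ j 0) //=; lia.
Qed.

Lemma coin_mul (A B : int -> 'M[C]_2) psi :
  coin (fun j => A j *m B j) psi = coin A (coin B psi).
Proof. by apply: boolp.funext => j; rewrite /coin mulmxA. Qed.

End Interleave.

Theorem lemmaA1 (R : realType) (alpha rho : int -> R[i])
  (hunit : forall j, `|alpha j| ^+ 2 + `|rho j| ^+ 2 = 1)
  (psi : int -> 'cV[R[i]]_2) :
  CMV_E alpha rho (ident psi) =
  ident (shiftP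
           (coin (fun j => sigma1 R *m Theta (alpha (2 * j)%R) (rho (2 * j)%R))
              (shiftM
                 (coin (fun j => sigma1 R *m Theta (alpha (2 * j - 1)%R) (rho (2 * j - 1)%R))
                    psi)))).
Proof.
rewrite /CMV_E /CMV_M /CMV_L ident_interleave.
rewrite (blockop_interleave _ (-1) _ _
          (fun j => Theta (alpha (2 * j - 1)) (rho (2 * j - 1)))) //.
rewrite -[interleave (-1) _](interleave_shiftM (-1)) addNr.
rewrite (blockop_interleave _ 0 _ _ (fun j => Theta (alpha (2 * j)) (rho (2 * j))))
  => [|//|j]; last by rewrite addr0.
by rewrite !coin_mul ident_interleave interleave_shiftP addNr.
Qed.
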